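(* Let $G=(V,E)$ be a connected (finite, simple) graph. If there is a set $D\subseteq V$ such that $G[D]$ is connected and every vertex in $V\setminus D$ has at least two neighbors in $D$, then $\mathrm{rc}(G) \le |D|+1$.
   Context: For an edge-coloring of a graph $G$, a path is rainbow if no two of its edges have the same color; $G$ is rainbow-connected if every pair of vertices is joined by a rainbow path. The rainbow connection number $\mathrm{rc}(G)$ is the minimum number of colors in an edge-coloring making $G$ rainbow-connected. $G[D]$ denotes the subgraph induced by $D$. *)

From mathcomp Require Import all_boot.
Set Implicit Arguments. Unset Strict Implicit. Unset Printing Implicit Defensive.

Definition simple_graph (T : finType) (e : rel T) : Prop :=
  symmetric e /\ irreflexive e.

Definition connected_graph (T : finType) (e : rel T) : Prop :=
  forall x y : T, connect e x y.

Definition induced_connected (T : finType) (e : rel T) (D : {set T}) : Prop :=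
  forall x y, x \in D -> y \in D ->
    connect [rel u v | e u v && (u \in D) && (v \in D)] x y.

(* Edge colouring with k colours: a symmetric colour function on pairs;
   only its values on edges matter. *)
Definition edge_colouring (T : finType) (k : nat) := T -> T -> 'I_k.

Fixpoint path_colours (T : finType) (k : nat) (c : edge_colouring T k)
    (x : T) (p : seq T) : seq 'I_k :=
  match p with
  | [::] => [::]
  | y :: p' => c x y :: path_colours c y p'
  end.

Definition rainbow_path (T : finType) (e : rel T) (k : nat)
    (c : edge_colouring T k) (x y : T) (p : seq T) : bool :=
  [&& path e x p, last x p == y & uniq (path_colours c x p)].

Definition rainbow_connected (T : finType) (e : rel T) (k : nat)
    (c : edge_colouring T k) : Prop :=
  forall x y : T, exists p : seq T, rainbow_path e c x y p.

Definition rc_le (T : finType) (e : rel T) (k : nat) : Prop :=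
  exists c : edge_colouring T k,
    (forall x y, c x y = c y x) /\ rainbow_connected e c.

From mathcomp Require Import all_boot.
From mathcomp Require Import zify.
Set Implicit Arguments. Unset Strict Implicit. Unset Printing Implicit Defensive.

(** Root a spanning tree of G[D] at r and give the edge from each vertex v to
    its parent the label of v; these |D| - 1 colours are pairwise distinct and
    leave two of the |D| + 1 colours free: the label of r and one extra colour.
    A vertex outside D is joined to two chosen neighbours in D by edges of the
    two free colours. Two vertices of D are joined by a rainbow tree path,
    built by repeatedly moving the deeper endpoint to its parent; a vertex
    outside D enters the tree through its edge of the first free colour and is
    reached through its edge of the second. *)

Lemma path_colours_rcons (T : finType) (k : nat) (c : edge_colouring T k) x p y :
  path_colours c x (rcons p y) = rcons (path_colours c x p) (c (last x p) y).
Proof. by elim: p x => //= a p IHp x; rewrite IHp. Qed.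

Lemma last_rev_belast (T : Type) (x : T) p : last (last x p) (rev (belast x p)) = x.
Proof.
by case/lastP: p => // p y; rewrite last_rcons belast_rcons rev_cons last_rcons.
Qed.

Lemma path_colours_rev (T : finType) (k : nat) (c : edge_colouring T k) x p :
  (forall u v, c u v = c v u) ->
  path_colours c (last x p) (rev (belast x p)) = rev (path_colours c x p).
Proof.
move=> c_sym; elim: p x => //= y p IHp x.
by rewrite rev_cons path_colours_rcons IHp last_rev_belast rev_cons c_sym.
Qed.

Section RainbowPaths.

Variables (T : finType) (e : rel T) (k : nat) (c : edge_colouring T k).

Lemma rainbow_path_cons x a y p :
  e x a -> c x a \notin path_colours c a p -> rainbow_path e c a y p ->
  rainbow_path e c x y (a :: p).
Proof.
by move=> e_xa fresh /and3P[ap ay up]; rewrite /rainbow_path /= e_xa ap ay fresh up.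
Qed.

Lemma rainbow_path_rcons x b y p :
  e b y -> c b y \notin path_colours c x p -> rainbow_path e c x b p ->
  rainbow_path e c x y (rcons p y).
Proof.
move=> e_by fresh /and3P[xp /eqP xb up].
rewrite /rainbow_path rcons_path last_rcons path_colours_rcons rcons_uniq xb.
by rewrite xp e_by eqxx fresh up.
Qed.

End RainbowPaths.

Lemma rooted_spanning_tree (T : finType) (e : rel T) (D : {set T}) (r : T) :
  r \in D -> induced_connected e D ->
  exists (par : T -> T) (h : T -> nat), h r = 0 /\
    forall v, v \in D -> v != r -> [/\ par v \in D, e (par v) v & h (par v) < h v].
Proof.
move=> rD connD.
pose eD := [rel u v | e u v && (u \in D) && (v \in D)].
pose reach n v := [exists t : n.-tuple T, path eD r t && (last r t == v)].
have reach_ex v : exists n, (v \in D) ==> reach n v.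
  case vD: (v \in D); last by exists 0.
  have /connectP[p rp ->] := connD r v rD vD.
  by exists (size p); apply/existsP; exists (in_tuple p); rewrite rp eqxx.
pose h v := ex_minn (reach_ex v).
have h_reach v : v \in D -> reach (h v) v.
  by rewrite /h; case: ex_minnP => n + _ vD; rewrite vD.
have h_min v n : reach n v -> h v <= n.
  by rewrite /h => rvn; case: ex_minnP => m _; apply; rewrite rvn implybT.
have /fin_all_exists[par parP] v : exists u,
    v \in D -> v != r -> [/\ u \in D, e u v & h u < h v].
  case vD: (v \in D); last by exists v.
  have /existsP[[p /= /eqP sz_p] /andP[rp /eqP pv]] := h_reach v vD.
  case/lastP: p pv sz_p rp => [<- _ _|q u]; first by exists r; rewrite eqxx.
  rewrite last_rcons size_rcons rcons_path => -> sz_q /andP[rq /andP[/andP[e_uv uD] _]].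
  exists (last r q) => _ _; split=> //; rewrite -sz_q ltnS.
  by apply: h_min; apply/existsP; exists (in_tuple q); rewrite rq eqxx.
exists par, h; split=> [|v vD vr]; last exact: parP.
by apply/eqP; rewrite -leqn0 h_min //; apply/existsP; exists [tuple]; rewrite /= eqxx.
Qed.

Lemma two_neighbours (T : finType) (e : rel T) (D : {set T}) :
  (forall v, v \notin D -> 1 < #|[set u in D | e v u]|) ->
  exists n1 n2 : T -> T, forall v, v \notin D ->
    [/\ n1 v \in D, n2 v \in D, e v (n1 v), e v (n2 v) & n1 v != n2 v].
Proof.
move=> nbD.
have /fin_all_exists[nb nbP] v : exists u : T * T, v \notin D ->
    [/\ u.1 \in D, u.2 \in D, e v u.1, e v u.2 & u.1 != u.2].
  have [vD | /nbD/card_gt1P[a [b []]]] := boolP (v \in D); first by exists (v, v).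
  by rewrite !inE => /andP[aD eva] /andP[bD evb] ab; exists (a, b).
by exists (fun v => (nb v).1), (fun v => (nb v).2).
Qed.

Section TreeColouring.

Variables (T : finType) (e : rel T) (D : {set T}) (r : T).
Hypothesis rD : r \in D.
Variables (par : T -> T) (h : T -> nat) (n1 n2 : T -> T).
Hypothesis e_sym : symmetric e.
Hypothesis h_root : h r = 0.
Hypothesis par_tree :
  forall v, v \in D -> v != r -> [/\ par v \in D, e (par v) v & h (par v) < h v].
Hypothesis hub_nbrs : forall v, v \notin D ->
  [/\ n1 v \in D, n2 v \in D, e v (n1 v), e v (n2 v) & n1 v != n2 v].

Local Notation colour := 'I_#|D|.+1.

Definition lab (w : T) : colour := widen_ord (leqnSn _) (enum_rank_in rD w).

Definition tree_colour (x y : T) : colour :=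
  if (x != r) && (y == par x) then lab x
  else if (y != r) && (x == par y) then lab y else ord0.

Definition hub_colour (v u : T) : colour :=
  if u == n1 v then lab r else if u == n2 v then ord_max else ord0.

Definition colouring : edge_colouring T #|D|.+1 := fun x y =>
  match x \in D, y \in D with
  | true, true => tree_colour x y
  | true, false => hub_colour y x
  | false, true => hub_colour x y
  | false, false => ord0
  end.

Lemma lab_inj : {in D &, injective lab}.
Proof.
by move=> u v uD vD /(congr1 val) /(@ord_inj #|D|); apply: enum_rank_in_inj.
Qed.

Lemma lab_neq_max w : lab w != ord_max.
Proof. by rewrite -val_eqE /= neq_ltn ltn_ord. Qed.

Lemma height0_root v : v \in D -> h v = 0 -> v = r.
Proof. by move=> vD hv0; apply/eqP/negPn/negP => /(par_tree vD) []; rewrite hv0. Qed.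

Lemma colouring_sym x y : colouring x y = colouring y x.
Proof.
rewrite /colouring; case xD: (x \in D); case yD: (y \in D) => //.
rewrite /tree_colour; case: ifP => [/andP[xr /eqP yx] | _]; case: ifP => //.
move=> /andP[yr /eqP xy].
have [_ _] := par_tree xD xr; have [_ _] := par_tree yD yr.
by rewrite -xy -yx => /ltn_trans/[apply]; rewrite ltnn.
Qed.

Lemma colouring_par v : v \in D -> v != r -> colouring v (par v) = lab v.
Proof.
move=> vD vr; have [pvD _ _] := par_tree vD vr.
by rewrite /colouring vD pvD /tree_colour vr eqxx.
Qed.

Lemma colouring_n1 v : v \notin D -> colouring v (n1 v) = lab r.
Proof.
move=> vD; have [n1D _ _ _ _] := hub_nbrs vD.
by rewrite /colouring (negbTE vD) n1D /hub_colour eqxx.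
Qed.

Lemma colouring_n2 v : v \notin D -> colouring (n2 v) v = ord_max.
Proof.
move=> vD; have [_ n2D _ _ n12] := hub_nbrs vD.
by rewrite /colouring (negbTE vD) n2D /hub_colour eq_sym (negbTE n12) eqxx.
Qed.

Definition lower (v : T) : {set T} := [set w in D :\ r | (h w < h v) || (w == v)].

Lemma lower_subset v : lower v \subset D.
Proof. by apply/subsetP => w; rewrite !inE => /andP[/andP[]]. Qed.

Lemma mem_lower v : v \in D -> v != r -> v \in lower v.
Proof. by move=> vD vr; rewrite !inE vD vr eqxx orbT. Qed.

Lemma notin_lower v w : h v <= h w -> w != v -> w \notin lower v.
Proof. by move=> hvw wv; rewrite !inE ltnNge hvw (negbTE wv) andbF. Qed.

Lemma lower_par v : v \in D -> v != r -> lower (par v) \subset lower v.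
Proof.
move=> vD vr; have [_ _ hpv] := par_tree vD vr.
apply/subsetP => w; rewrite !inE => /andP[-> /orP[hw | /eqP->]].
  by rewrite (ltn_trans hw).
by rewrite hpv.
Qed.

Lemma lab_notin_imset v (S : {set T}) :
  v \in D -> S \subset D -> v \notin S -> lab v \notin lab @: S.
Proof.
move=> vD /subsetP SD vS; apply/imsetP => -[w wS /(lab_inj vD (SD w wS)) vw].
by rewrite vw wS in vS.
Qed.

(* This invariant keeps the label of the deeper endpoint fresh when that
   endpoint moves to its parent. *)
Lemma tree_path_lower n x y : h x + h y < n -> x \in D -> y \in D ->
  exists p, [/\ path e x p, last x p = y, uniq (path_colours colouring x p)
    & {subset path_colours colouring x p <= lab @: (lower x :|: lower y)}].
Proof.
elim: n x y => // n IHn x y.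
wlog le_yx : x y / h y <= h x.
  move=> wlog_le hxy xD yD; have [le_xy | /ltnW le_xy] := leqP (h y) (h x).
    exact: wlog_le.
  have [|p [yp py up sub_p]] := wlog_le y x le_xy _ yD xD; first by rewrite addnC.
  exists (rev (belast y p)).
  rewrite -py path_colours_rev ?last_rev_belast ?rev_uniq; last exact: colouring_sym.
  rewrite rev_path (eq_path (fun u v => e_sym v u)) py.
  by split=> // col; rewrite mem_rev setUC => /sub_p.
move=> hxy xD yD; have [<- | neq_xy] := eqVneq x y; first by exists [::].
have xr : x != r.
  apply: contra_neq neq_xy => x_r; move: le_yx; rewrite x_r h_root leqn0.
  by move=> /eqP /(height0_root yD).
have [pxD e_px h_px] := par_tree xD xr.
have [|p [pp pl up sub_p]] := IHn (par x) y _ pxD yD; first by lia.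
have x_fresh : x \notin lower (par x) :|: lower y.
  rewrite inE negb_or !notin_lower ?(ltnW h_px) //.
  by apply: contraTneq h_px => <-; rewrite ltnn.
exists (par x :: p); rewrite /= colouring_par // e_sym e_px pp pl up andbT; split=> //.
  by rewrite (contra (sub_p _)) // lab_notin_imset // subUset !lower_subset.
move=> col; rewrite inE => /predU1P[-> | /sub_p col_lower].
  by rewrite imset_f // inE mem_lower.
by apply: subsetP col_lower; rewrite imsetS // setSU // lower_par.
Qed.

Lemma tree_rainbow_path x y : x \in D -> y \in D ->
  exists p, [/\ rainbow_path e colouring x y p, lab r \notin path_colours colouring x p
    & ord_max \notin path_colours colouring x p].
Proof.
move=> xD yD; have [p [xp py up sub_p]] := tree_path_lower (ltnSn (h x + h y)) xD yD.
exists p; rewrite /rainbow_path xp py eqxx up; split=> //.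
  apply: contra (sub_p _) _; rewrite lab_notin_imset // ?subUset ?lower_subset //.
  by rewrite !inE eqxx.
apply/negP => /sub_p/imsetP[w _ /eqP]; apply/negP; rewrite eq_sym; exact: lab_neq_max.
Qed.

Lemma rainbow_path_from_tree x y : x \in D ->
  exists p, rainbow_path e colouring x y p && (lab r \notin path_colours colouring x p).
Proof.
move=> xD; have [yD | yD] := boolP (y \in D).
  by have [p [xyp rp _]] := tree_rainbow_path xD yD; exists p; rewrite xyp.
have [_ n2D _ e_yn2 _] := hub_nbrs yD.
have [p [xp rp mp]] := tree_rainbow_path xD n2D.
have xyp : rainbow_path e colouring x y (rcons p y).
  by apply: rainbow_path_rcons xp; rewrite ?colouring_n2 // e_sym.
have /and3P[_ /eqP pn2 _] := xp.
exists (rcons p y); rewrite xyp path_colours_rcons pn2 colouring_n2 //.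
by rewrite mem_rcons inE negb_or lab_neq_max.
Qed.

Lemma colouring_rainbow_connected : rainbow_connected e colouring.
Proof.
move=> x y; have [xD | xD] := boolP (x \in D).
  by have [p /andP[xyp _]] := rainbow_path_from_tree y xD; exists p.
have [n1D _ e_xn1 _ _] := hub_nbrs xD.
have [p /andP[n1yp rp]] := rainbow_path_from_tree y n1D.
by exists (n1 x :: p); rewrite rainbow_path_cons // colouring_n1.
Qed.

End TreeColouring.

Theorem lemma1 (T : finType) (e : rel T) (D : {set T}) :
  simple_graph e -> connected_graph e ->
  induced_connected e D ->
  (forall v, v \notin D -> 1 < #|[set u in D | e v u]|) ->
  rc_le e #|D|.+1.
Proof.
(* Connectivity of G follows from the other hypotheses. *)
move=> [e_sym _] _ connD nbD.
have [n1 [n2 nbrs]] := two_neighbours nbD.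
have [D0 | [r rD]] := set_0Vmem D.
  exists (fun _ _ => ord0); split=> // x.
  by have := nbD x; rewrite D0 inE => /(_ isT)/card_gt1P[u [v []]]; rewrite !inE.
have [par [h [h_r tree]]] := rooted_spanning_tree rD connD.
exists (colouring rD par n1 n2); split; first exact: colouring_sym tree.
exact: colouring_rainbow_connected e_sym h_r tree nbrs.
Qed.
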